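(* FT satisfies clone-proximity: for every finite candidate set $C$, every profile $P$ over $C$ in which $a,a'\in C$ are clones, every axis $\triangleleft\in\mathrm{FT}(P)$, every candidate $x$ with $a\triangleleft x\triangleleft a'$ or $a'\triangleleft x\triangleleft a$, and every ballot $A\in P$ with $a,a'\in A$, we have $x\in A$. For each $f\in\{\mathrm{VD},\mathrm{MF},\mathrm{BC},\mathrm{MS}\}$ clone-proximity fails: there exist $C$, a profile $P$ with clones $a,a'$, an axis $\triangleleft\in f(P)$, a candidate $x$ strictly between $a$ and $a'$ on $\triangleleft$, and a ballot $A\in P$ with $a,a'\in A$ and $x\notin A$.
   Context: Let $C$ be a finite set of candidates. An approval ballot is a nonempty subset $A\subseteq C$; a profile is a finite sequence of ballots. Two candidates $a,a'$ are clones in $P$ if for every ballot $A\in P$, $a\in A$ iff $a'\in A$. An axis is a strict linear order $\triangleleft$ on $C$; $a\trianglelefteq b$ means $a\triangleleft b$ or $a=b$. A ballot $A$ is an interval of $\triangleleft$ if for all $a,b\in A$ and every $c$ with $a\triangleleft c\triangleleft b$ we have $c\in A$. For a cost function $\mathrm{cost}_f$, the scoring rule returns $f(P)=\arg\min_{\triangleleft}\sum_{A\in P}\mathrm{cost}_f(A,\triangleleft)$ over all axes on $C$. The five rules are the scoring rules with costs: $\mathrm{cost}_{\mathrm{VD}}(A,\triangleleft)=0$ if $A$ is an interval of $\triangleleft$ and $1$ otherwise; $\mathrm{cost}_{\mathrm{MF}}(A,\triangleleft)=\min_{x,y\in A,\ x\trianglelefteq y}\big(|\{z\in A: z\triangleleft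 x \text{ or } y\triangleleft z\}|+|\{z\notin A: x\triangleleft z\triangleleft y\}|\big)$; $\mathrm{cost}_{\mathrm{BC}}(A,\triangleleft)=|\{b\notin A: a\triangleleft b\triangleleft c \text{ for some } a,c\in A\}|$; $\mathrm{cost}_{\mathrm{MS}}(A,\triangleleft)=\sum_{x\in C\setminus A}\min\big(|\{y\in A:y\triangleleft x\}|,\,|\{y\in A:x\triangleleft y\}|\big)$; $\mathrm{cost}_{\mathrm{FT}}(A,\triangleleft)=\sum_{x\in C\setminus A}|\{y\in A:y\triangleleft x\}|\cdot|\{y\in A:x\triangleleft y\}|$. *)

From mathcomp Require Import all_boot.
Set Implicit Arguments. Unset Strict Implicit. Unset Printing Implicit Defensive.

Section Axes.
Variable C : finType.

(* An axis is a strict linear order on C, given as a boolean relation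
   [lt] with [lt a b] meaning  a ◁ b. *)
Definition is_axis (lt : rel C) : bool :=
  [&& [forall x, ~~ lt x x],
      [forall x, forall y, forall z, lt x y ==> lt y z ==> lt x z] &
      [forall x, forall y, (x != y) ==> (lt x y || lt y x)]].

Definition le_ax (lt : rel C) (a b : C) : bool := (a == b) || lt a b.

Definition is_interval (lt : rel C) (A : {set C}) : bool :=
  [forall a, forall b, forall c,
     (a \in A) ==> (b \in A) ==> lt a c ==> lt c b ==> (c \in A)].

Definition cost := {set C} -> rel C -> nat.

Definition cost_VD : cost := fun A lt => if is_interval lt A then 0 else 1.

(* minimum over pairs x ⊴ y in A; the default #|C| is never smaller than the
   true minimum for nonempty A (the pair x = y gives #|A| - 1 < #|C|). *)
Definition cost_MF : cost := fun A lt =>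
  \big[minn/#|C|]_(p : C * C | [&& p.1 \in A, p.2 \in A & le_ax lt p.1 p.2])
     (#|[set z in A | lt z p.1 || lt p.2 z]|
      + #|[set z in ~: A | lt p.1 z && lt z p.2]|).

Definition cost_BC : cost := fun A lt =>
  #|[set b in ~: A | [exists a in A, exists c in A, lt a b && lt b c]]|.

Definition cost_MS : cost := fun A lt =>
  \sum_(x in ~: A) minn #|[set y in A | lt y x]| #|[set y in A | lt x y]|.

Definition cost_FT : cost := fun A lt =>
  \sum_(x in ~: A) #|[set y in A | lt y x]| * #|[set y in A | lt x y]|.

Definition total_cost (f : cost) (P : seq {set C}) (lt : rel C) : nat :=
  \sum_(A <- P) f A lt.

Definition in_rule (f : cost) (P : seq {set C}) (lt : rel C) : Prop :=
  is_axis lt /\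
  forall lt' : rel C, is_axis lt' -> total_cost f P lt <= total_cost f P lt'.

Definition is_profile (P : seq {set C}) : bool := all (fun A : {set C} => A != set0) P.

Definition clones (P : seq {set C}) (a a' : C) : bool :=
  all (fun A : {set C} => (a \in A) == (a' \in A)) P.

Definition strictly_between (lt : rel C) (a a' x : C) : bool :=
  (lt a x && lt x a') || (lt a' x && lt x a).

End Axes.

From HB Require Import structures.
From mathcomp Require Import all_boot perm zify.
From Stdlib Require Import FunctionalExtensionality.
Set Implicit Arguments. Unset Strict Implicit. Unset Printing Implicit Defensive.

(* Compare the optimal axis with the two axes obtained by moving a' right after a
   and a right before a'.  For a non-member x of a ballot, the FT term L·R (members
   left and right of x) becomes (L+1)(R-1) and (L-1)(R+1) when the ballot contains
   the clones and x lies between them; otherwise the moves only exchange the terms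
   of a and a'.  Hence the two new costs add up to twice the old one minus twice the
   number of such "separated" pairs, and optimality forces that number to be 0.
   For VD, MF, BC and MS, explicit profiles on five candidates are checked to be
   optimal by evaluating all 120 axes. *)

Section Axis.
Variables (C : finType) (lt : rel C).
Hypothesis ax : is_axis lt.

Lemma axis_irr x : lt x x = false.
Proof. by case/and3P: ax => /forallP/(_ x)/negbTE. Qed.

Lemma axis_trans x y z : lt x y -> lt y z -> lt x z.
Proof.
by case/and3P: ax => _ /forallP/(_ x)/forallP/(_ y)/forallP/(_ z)/implyP H _ /H/implyP.
Qed.

Lemma axis_total x y : x != y -> lt x y || lt y x.
Proof. by case/and3P: ax => _ _ /forallP/(_ x)/forallP/(_ y)/implyP. Qed.

Lemma axis_nlt x y : x != y -> ~~ lt x y = lt y x.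
Proof.
move=> xy; case lxy: (lt x y); last by move: (axis_total xy); rewrite lxy.
by apply/esym/negbTE/negP => /(axis_trans lxy); rewrite axis_irr.
Qed.

End Axis.

(* [relocate lt m S] takes [m] out of the axis [lt] and reinserts it right after
   the initial segment [S] of the remaining candidates. *)
Definition relocate (C : finType) (lt : rel C) (m : C) (S : pred C) : rel C :=
  fun u v => if u == m then (v != m) && ~~ S v else if v == m then S u else lt u v.

Definition ft_term (C : finType) (lt : rel C) (B : {set C}) (x : C) : nat :=
  #|[set y in B | lt y x]| * #|[set y in B | lt x y]|.

Lemma card_sep_update (T : finType) (B : {set T}) (m : T) (p q : pred T) :
  m \in B -> (forall y, y != m -> p y = q y) ->
  #|[set y in B | p y]| + q m = #|[set y in B | q y]| + p m.
Proof.
move=> mB pq; rewrite (cardsD1 m [set y in B | p y]) (cardsD1 m [set y in B | q y]).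
have -> : [set y in B | p y] :\ m = [set y in B | q y] :\ m.
  by apply/setP => y; rewrite !inE; case: eqVneq => //= /pq ->.
by rewrite !inE mB /=; lia.
Qed.

Section Relocate.
Variables (C : finType) (lt : rel C) (m : C) (S : pred C).
Hypothesis ax : is_axis lt.
Let lt_m := relocate lt m S.

Lemma relocate_axis :
  (forall u w, u != m -> w != m -> lt u w -> S w -> S u) -> is_axis lt_m.
Proof.
move=> S_down; apply/and3P; split.
- apply/forallP => x; rewrite /lt_m /relocate.
  by case: (eqVneq x m) => [->|_]; rewrite ?eqxx ?axis_irr.
- apply/forallP => x; apply/forallP => y; apply/forallP => z.
  apply/implyP => lxy; apply/implyP; move: lxy; rewrite /lt_m /relocate.
  case: (eqVneq x m) => [xm|xm]; case: (eqVneq y m) => [ym|ym];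
    case: (eqVneq z m) => [zm|zm] //=; rewrite ?xm ?ym ?zm ?eqxx //=.
  + by move=> /negP.
  + by move=> Sy lyz; apply/negP => /(S_down y z ym zm lyz); apply/negP.
  + move=> Sx /negP Sz; have xz : x != z by apply/eqP => exz; apply: Sz; rewrite -exz.
    by case/orP: (axis_total ax xz) => // lzx; case: Sz; apply: S_down lzx Sx.
  + by move=> lxy /(S_down x y xm ym lxy).
  + exact: axis_trans.
- apply/forallP => x; apply/forallP => y; apply/implyP => xy; rewrite /lt_m /relocate.
  case: (eqVneq x m) => [xm|xm]; case: (eqVneq y m) => [ym|ym] //=.
  + by rewrite xm ym eqxx in xy.
  + by case: (S y).
  + by case: (S x).
  + exact: axis_total.
Qed.

Lemma relocate_left_count (B : {set C}) x : m \in B -> x != m ->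
  #|[set y in B | lt_m y x]| + lt m x = #|[set y in B | lt y x]| + ~~ S x.
Proof.
move=> mB xm; have -> : ~~ S x = lt_m m x by rewrite /lt_m /relocate eqxx xm.
by apply: card_sep_update => // y ym; rewrite /lt_m /relocate (negbTE ym) (negbTE xm).
Qed.

Lemma relocate_right_count (B : {set C}) x : m \in B -> x != m ->
  #|[set y in B | lt_m x y]| + lt x m = #|[set y in B | lt x y]| + S x.
Proof.
move=> mB xm; have -> : S x = lt_m x m by rewrite /lt_m /relocate eqxx (negbTE xm).
by apply: card_sep_update => // y ym; rewrite /lt_m /relocate (negbTE ym) (negbTE xm).
Qed.

Lemma ft_term_relocate_other (B : {set C}) x : m \notin B -> x != m ->
  ft_term lt_m B x = ft_term lt B x.
Proof.
move=> mB xm; have ym y : y \in B -> y != m by apply: contraTneq => ->.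
by rewrite /ft_term; congr (_ * _); apply: eq_card => y; rewrite !inE;
  case yB: (y \in B); rewrite //= /lt_m /relocate (negbTE (ym y yB)) (negbTE xm).
Qed.

Lemma ft_term_relocate_moved (B : {set C}) z : m \notin B -> z \notin B ->
  {in B, forall y, S y = lt y z} -> ft_term lt_m B m = ft_term lt B z.
Proof.
move=> mB zB Sz; have ym y : y \in B -> y != m by apply: contraTneq => ->.
have yz y : y \in B -> y != z by apply: contraTneq => ->.
rewrite /ft_term; congr (_ * _); apply: eq_card => y; rewrite !inE;
  case yB: (y \in B); rewrite //= /lt_m /relocate eqxx (negbTE (ym y yB)) ?Sz //.
by rewrite axis_nlt ?yz.
Qed.

End Relocate.

Lemma shifted_products (p q : bool) L0 R0 L1 R1 L2 R2 : (q ==> p) ->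
  L1 + q = L0 + p -> R1 + ~~ q = R0 + ~~ p ->
  L2 + p = L0 + q -> R2 + ~~ p = R0 + ~~ q ->
  L1 * R1 + L2 * R2 + 2 * (p && ~~ q) = 2 * (L0 * R0).
Proof. by case: p; case: q => //= _; nia. Qed.

Section Glue.
Variables (C : finType) (lt : rel C) (a a' : C).
Hypotheses (ax : is_axis lt) (lt_aa' : lt a a').

(* [a'] moved to just after [a], and [a] moved to just before [a']. *)
Definition glue_after := relocate lt a' (le_ax lt ^~ a).
Definition glue_before := relocate lt a (lt ^~ a').

Let neq_aa' : a != a'.
Proof. by apply: contraTneq lt_aa' => ->; rewrite axis_irr. Qed.

Lemma glue_after_axis : is_axis glue_after.
Proof.
apply: relocate_axis => // u w _ _ luw; rewrite /le_ax => /orP[/eqP wa|lwa].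
  by rewrite -wa luw orbT.
by rewrite (axis_trans ax luw lwa) orbT.
Qed.

Lemma glue_before_axis : is_axis glue_before.
Proof. by apply: relocate_axis => // u w _ _; apply: axis_trans. Qed.

Lemma ft_term_glue_in (B : {set C}) x : a \in B -> a' \in B -> x \notin B ->
  ft_term glue_after B x + ft_term glue_before B x + 2 * (lt a x && lt x a')
  = 2 * ft_term lt B x.
Proof.
move=> aB a'B xB.
have xa : x != a by apply: contraNneq xB => ->.
have xa' : x != a' by apply: contraNneq xB => ->.
have lxa : lt x a = ~~ lt a x by rewrite -(axis_nlt ax xa) negbK.
have lxa' : lt x a' = ~~ lt a' x by rewrite -(axis_nlt ax xa') negbK.
have := relocate_right_count lt (lt ^~ a') aB xa.
have := relocate_left_count lt (lt ^~ a') aB xa.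
have := relocate_right_count lt (le_ax lt ^~ a) a'B xa'.
have := relocate_left_count lt (le_ax lt ^~ a) a'B xa'.
rewrite /ft_term /le_ax (negbTE xa) /= lxa lxa' !negbK -/glue_after -/glue_before.
apply: shifted_products; apply/implyP; exact: axis_trans lt_aa'.
Qed.

Lemma ft_term_glue_out (B : {set C}) x : a \notin B -> a' \notin B ->
  ft_term glue_after B x + ft_term glue_before B x
  = ft_term lt B x + ft_term lt B (tperm a a' x).
Proof.
move=> aB a'B; have ya y : y \in B -> y != a by apply: contraTneq => ->.
have after_a : ft_term glue_after B a = ft_term lt B a.
  exact: ft_term_relocate_other.
have before_a' : ft_term glue_before B a' = ft_term lt B a'.
  by apply: ft_term_relocate_other; rewrite // eq_sym.
case: tpermP => [->|->|/eqP xa /eqP xa'].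
- by rewrite after_a (ft_term_relocate_moved (z := a') ax).
- rewrite before_a' (ft_term_relocate_moved (z := a) ax) 1?addnC //.
  by move=> y /ya ya'; rewrite /le_ax (negbTE ya').
- by rewrite !ft_term_relocate_other.
Qed.

Definition between_count (B : {set C}) : nat :=
  \sum_(x in ~: B) ((a \in B) && (lt a x && lt x a')).

Lemma cost_FT_glue (B : {set C}) : (a \in B) = (a' \in B) ->
  cost_FT B glue_after + cost_FT B glue_before + 2 * between_count B
  = 2 * cost_FT B lt.
Proof.
rewrite /cost_FT /between_count !big_distrr -!big_split /=.
move=> aa'B; case aB: (a \in B).
  have a'B : a' \in B by rewrite -aa'B.
  by apply: eq_bigr => x; rewrite inE => xB; apply: ft_term_glue_in.
rewrite (eq_bigr (fun x => ft_term lt B x + ft_term lt B (tperm a a' x))); last first.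
  by move=> x _; rewrite muln0 addn0 ft_term_glue_out -?aa'B ?aB.
rewrite big_split -big_distrr /= mul2n -addnn; congr (_ + _).
rewrite [RHS](reindex_inj (@perm_inj _ (tperm a a'))); apply: eq_bigl => x.
by rewrite !inE; case: tpermP => [->|->|] //; rewrite aa'B.
Qed.

Lemma total_cost_FT_glue (P : seq {set C}) : clones P a a' ->
  total_cost (@cost_FT C) P glue_after + total_cost (@cost_FT C) P glue_before
  + 2 * \sum_(B <- P) between_count B = 2 * total_cost (@cost_FT C) P lt.
Proof.
move=> /allP cl; rewrite /total_cost !big_distrr -!big_split /=.
by apply: eq_big_seq => B /cl /eqP; apply: cost_FT_glue.
Qed.

End Glue.

Lemma FT_clone_proximity (C : finType) (P : seq {set C}) (a a' x : C) (lt : rel C)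
    (A : {set C}) :
  clones P a a' -> in_rule (@cost_FT C) P lt -> lt a x -> lt x a' ->
  A \in P -> a \in A -> x \in A.
Proof.
move=> cl [ax opt] lax lxa' AP aA; apply/negPn/negP => xA.
have lt_aa' := axis_trans ax lax lxa'.
have total := total_cost_FT_glue ax lt_aa' cl.
have le_after := opt _ (glue_after_axis a a' ax).
have le_before := opt _ (glue_before_axis a a' ax).
have /eqP : \sum_(B <- P) between_count lt a a' B = 0 by lia.
rewrite sum_nat_seq_eq0 => /allP /(_ A AP) /=.
by rewrite /between_count sum_nat_eq0 => /forallP /(_ x); rewrite inE xA aA lax lxa'.
Qed.

(* Candidates are [0, ..., n-1]; [s] lists their positions on the axis. *)
Definition pos_lt (s : seq nat) (i j : nat) : bool := nth 0 s i < nth 0 s j.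
Definition axis_of n (s : seq nat) : rel 'I_n := fun u v => pos_lt s u v.
Definition ballot_of n (b : seq nat) : {set 'I_n} := [set y : 'I_n | nat_of_ord y \in b].
Arguments axis_of : clear implicits.
Arguments ballot_of : clear implicits.

Lemma axis_of_axis n s : perm_eq s (iota 0 n) -> is_axis (axis_of n s).
Proof.
move=> ps; have us : uniq s by rewrite (perm_uniq ps) iota_uniq.
have ss : size s = n by rewrite (perm_size ps) size_iota.
apply/and3P; split.
- by apply/forallP => x; rewrite /axis_of /pos_lt ltnn.
- apply/forallP => x; apply/forallP => y; apply/forallP => z.
  by apply/implyP => lxy; apply/implyP; apply: ltn_trans lxy.
- apply/forallP => x; apply/forallP => y; apply/implyP => xy.
  by rewrite /axis_of /pos_lt -neq_ltn nth_uniq ?ss ?ltn_ord.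
Qed.

Definition axis_rank (C : finType) (lt : rel C) (x : C) : nat := #|[set y | lt y x]|.

Lemma axis_rankE (C : finType) (lt : rel C) : is_axis lt ->
  forall u v, lt u v = (axis_rank lt u < axis_rank lt v).
Proof.
move=> ax; have rank_lt u v : lt u v -> axis_rank lt u < axis_rank lt v.
  move=> luv; apply: proper_card; apply/properP; split.
    by apply/subsetP => y; rewrite !inE => /axis_trans; apply.
  by exists u; rewrite !inE ?axis_irr.
move=> u v; apply/idP/idP; first exact: rank_lt.
case: (eqVneq u v) => [->|uv]; first by rewrite ltnn.
by move=> ruv; case/orP: (axis_total ax uv) => // /rank_lt; lia.
Qed.

Lemma axis_ofE n (lt : rel 'I_n) : is_axis lt ->
  exists2 s, perm_eq s (iota 0 n) & lt = axis_of n s.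
Proof.
move=> ax; pose s := [seq axis_rank lt x | x <- enum 'I_n].
have nth_s (u : 'I_n) : nth 0 s u = axis_rank lt u.
  by rewrite (nth_map u) ?size_enum_ord // nth_ord_enum.
have rank_inj : injective (axis_rank lt).
  move=> u v e; case: (eqVneq u v) => // uv.
  by case/orP: (axis_total ax uv); rewrite (axis_rankE ax) e ltnn.
exists s; last first.
  apply: functional_extensionality => u; apply: functional_extensionality => v.
  by rewrite /axis_of /pos_lt !nth_s (axis_rankE ax).
have us : uniq s by rewrite map_inj_uniq ?enum_uniq.
have sub : {subset s <= iota 0 n}.
  move=> _ /mapP[x _ ->]; rewrite mem_iota /= -{2}[n]card_ord -cardsT.
  by apply: proper_card; apply/properP; split => //; exists x; rewrite !inE ?axis_irr.
have size_s : size (iota 0 n) <= size s by rewrite size_map size_enum_ord size_iota.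
have [_ mem_s] := uniq_min_size us sub size_s.
exact: uniq_perm us (iota_uniq 0 n) mem_s.
Qed.

Lemma card_ord_sum1 n (p : pred nat) : #|[set y : 'I_n | p y]| = \sum_(0 <= i < n | p i) 1.
Proof. by rewrite -sum1_card big_mkord; apply: eq_bigl => i; rewrite inE. Qed.

(* Copies of the costs on [ballot_of n b] and [axis_of n s] that [vm_compute]
   evaluates quickly; the finset versions are far too slow to run on 120 axes. *)
Definition cost_VD_nat n (b s : seq nat) : nat :=
  if all (fun i => all (fun j => all (fun k =>
       (i \in b) ==> (j \in b) ==> pos_lt s i k ==> pos_lt s k j ==> (k \in b))
     (iota 0 n)) (iota 0 n)) (iota 0 n)
  then 0 else 1.

Definition cost_MF_nat n (b s : seq nat) : nat :=
  \big[minn/n]_(0 <= i < n | i \in b)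
    \big[minn/n]_(0 <= j < n | (j \in b) && ((i == j) || pos_lt s i j))
      (\sum_(0 <= z < n | (z \in b) && (pos_lt s z i || pos_lt s j z)) 1
       + \sum_(0 <= z < n | (z \notin b) && (pos_lt s i z && pos_lt s z j)) 1).

Definition cost_BC_nat n (b s : seq nat) : nat :=
  \sum_(0 <= x < n | [&& x \notin b,
      has (fun y => (y \in b) && pos_lt s y x) (iota 0 n)
    & has (fun z => (z \in b) && pos_lt s x z) (iota 0 n)]) 1.

Definition cost_MS_nat n (b s : seq nat) : nat :=
  \sum_(0 <= x < n | x \notin b)
    minn (\sum_(0 <= y < n | (y \in b) && pos_lt s y x) 1)
         (\sum_(0 <= y < n | (y \in b) && pos_lt s x y) 1).

Lemma cost_VD_natE n b s : cost_VD (ballot_of n b) (axis_of n s) = cost_VD_nat n b s.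
Proof.
rewrite /cost_VD /cost_VD_nat; congr (if _ then _ else _).
have mem_iota_ord (w : 'I_n) : nat_of_ord w \in iota 0 n by rewrite mem_iota /= ltn_ord.
apply/idP/idP => [H|H].
- apply/allP => i; rewrite mem_iota => /= ltin; apply/allP => j; rewrite mem_iota => /= ltjn.
  apply/allP => k; rewrite mem_iota => /= ltkn.
  move/forallP: H => /(_ (Ordinal ltin)) /forallP /(_ (Ordinal ltjn)) /forallP.
  by move=> /(_ (Ordinal ltkn)); rewrite !inE.
- apply/forallP => x; apply/forallP => y; apply/forallP => z.
  move/allP: H => /(_ _ (mem_iota_ord x)) /allP /(_ _ (mem_iota_ord y)) /allP.
  by move=> /(_ _ (mem_iota_ord z)); rewrite !inE.
Qed.

(* [pair_big_dep_idem] needs [minn] as a commutative semigroup law. *)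
HB.instance Definition _ := SemiGroup.isComLaw.Build nat minn minnA minnC.

Lemma cost_MF_natE n b s : cost_MF (ballot_of n b) (axis_of n s) = cost_MF_nat n b s.
Proof.
rewrite /cost_MF /cost_MF_nat card_ord.
pose G (i j : 'I_n) := #|[set z in ballot_of n b | axis_of n s z i || axis_of n s j z]|
  + #|[set z in ~: ballot_of n b | axis_of n s i z && axis_of n s z j]|.
rewrite -(@pair_big_dep_idem _ minn n (minnn n) _ _ (fun i => i \in ballot_of n b)
  (fun i j => (j \in ballot_of n b) && le_ax (axis_of n s) i j) G).
rewrite big_mkord; apply: eq_big => [i|i _]; first by rewrite !inE.
rewrite big_mkord; apply: eq_big => [j|j _]; first by rewrite !inE.
by rewrite /G -!card_ord_sum1; congr addn; apply: eq_card => y; rewrite !inE.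
Qed.

Lemma cost_BC_natE n b s : cost_BC (ballot_of n b) (axis_of n s) = cost_BC_nat n b s.
Proof.
rewrite /cost_BC /cost_BC_nat -card_ord_sum1; apply: eq_card => z; rewrite !inE.
congr andb; apply/existsP/andP.
- case=> a /andP[aA /existsP[c /andP[cA /andP[laz lzc]]]]; move: aA cA; rewrite !inE => aA cA.
  split; apply/hasP.
    by exists (nat_of_ord a); [rewrite mem_iota /= ltn_ord | rewrite aA].
  by exists (nat_of_ord c); [rewrite mem_iota /= ltn_ord | rewrite cA].
- case=> /hasP[i + /andP[ib liz]] /hasP[k + /andP[kb lzk]]; rewrite !mem_iota /=.
  move=> ltin ltkn; exists (Ordinal ltin); rewrite inE ib /=.
  by apply/existsP; exists (Ordinal ltkn); rewrite inE kb /=; apply/andP.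
Qed.

Lemma cost_MS_natE n b s : cost_MS (ballot_of n b) (axis_of n s) = cost_MS_nat n b s.
Proof.
rewrite /cost_MS /cost_MS_nat big_mkord; apply: eq_big => [x|x _]; first by rewrite !inE.
by rewrite -!card_ord_sum1; congr minn; apply: eq_card => y; rewrite !inE.
Qed.

Definition clone_proximity_fails (f : forall C : finType, cost C) : Prop :=
  exists (C : finType) (P : seq {set C}) (a a' : C) (lt : rel C) (x : C) (A : {set C}),
    [/\ is_profile P, clones P a a', in_rule (f C) P lt, strictly_between lt a a' x &
        [/\ A \in P, a \in A, a' \in A & x \notin A]].

(* Five candidates; the clones are [0] and [1], the candidate between them [2]. *)
Lemma clone_proximity_fails_by_computation (f : forall C : finType, cost C)
    (f_nat : nat -> seq nat -> seq nat -> nat)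
    (f_natE : forall b s, f _ (ballot_of 5 b) (axis_of 5 s) = f_nat 5 b s)
    (bs : seq (seq nat)) (s0 bA : seq nat) :
  perm_eq s0 (iota 0 5) ->
  all (fun s => \sum_(b <- bs) f_nat 5 b s0 <= \sum_(b <- bs) f_nat 5 b s)
    (permutations (iota 0 5)) ->
  all (fun b => has (mem b) (iota 0 5)) bs ->
  all (fun b => (0 \in b) == (1 \in b)) bs ->
  (pos_lt s0 0 2 && pos_lt s0 2 1) || (pos_lt s0 1 2 && pos_lt s0 2 0) ->
  bA \in bs -> 0 \in bA -> 1 \in bA -> 2 \notin bA ->
  clone_proximity_fails f.
Proof.
move=> s0_perm s0_opt nonempty clone between bA_in bA0 bA1 bA2.
have total s : total_cost (f _) (map (ballot_of 5) bs) (axis_of 5 s)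
    = \sum_(b <- bs) f_nat 5 b s.
  by rewrite /total_cost big_map; apply: eq_bigr => b _; apply: f_natE.
exists 'I_5, (map (ballot_of 5) bs), (@Ordinal 5 0 isT), (@Ordinal 5 1 isT),
  (axis_of 5 s0), (@Ordinal 5 2 isT), (ballot_of 5 bA); split => //.
- rewrite /is_profile all_map; apply/allP => b /(allP nonempty) /hasP[i].
  by rewrite mem_iota => /= ltin ib; apply/set0Pn; exists (Ordinal ltin); rewrite inE.
- by rewrite /clones all_map; apply/allP => b /(allP clone); rewrite /= !inE.
- split; first exact: axis_of_axis.
  move=> lt' /axis_ofE[s' s'_perm ->]; rewrite !total.
  by apply: (allP s0_opt s'); rewrite mem_permutations.
- by split; rewrite ?inE //; apply: map_f.
Qed.

Lemma VD_clone_proximity_fails : clone_proximity_fails (@cost_VD).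
Proof.
apply: (@clone_proximity_fails_by_computation _ cost_VD_nat (cost_VD_natE 5)
  [:: [:: 0; 1; 3]; [:: 2; 3]; [:: 3; 4]] [:: 0; 4; 1; 2; 3] [:: 0; 1; 3]) => //.
by rewrite /cost_VD_nat !unlock; vm_compute.
Qed.

Lemma MF_clone_proximity_fails : clone_proximity_fails (@cost_MF).
Proof.
apply: (@clone_proximity_fails_by_computation _ cost_MF_nat (cost_MF_natE 5)
  [:: [:: 2; 3]; [:: 2; 4]; [:: 0; 1; 3; 4]] [:: 0; 4; 2; 1; 3] [:: 0; 1; 3; 4]) => //.
by rewrite /cost_MF_nat !unlock; vm_compute.
Qed.

Lemma BC_clone_proximity_fails : clone_proximity_fails (@cost_BC).
Proof.
apply: (@clone_proximity_fails_by_computation _ cost_BC_nat (cost_BC_natE 5)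
  [:: [:: 2; 3]; [:: 2; 4]; [:: 0; 1; 3; 4]] [:: 0; 4; 2; 1; 3] [:: 0; 1; 3; 4]) => //.
by rewrite /cost_BC_nat !unlock; vm_compute.
Qed.

Lemma MS_clone_proximity_fails : clone_proximity_fails (@cost_MS).
Proof.
apply: (@clone_proximity_fails_by_computation _ cost_MS_nat (cost_MS_natE 5)
  [:: [:: 0; 1; 2]; [:: 0; 1; 3; 4]; [:: 2; 3; 4]] [:: 0; 2; 1; 3; 4] [:: 0; 1; 3; 4]) => //.
by rewrite /cost_MS_nat !unlock; vm_compute.
Qed.

Theorem mainTheorem9 :
  (forall (C : finType) (P : seq {set C}) (a a' : C),
     is_profile P -> clones P a a' ->
     forall lt : rel C, in_rule (@cost_FT C) P lt ->
     forall x : C, strictly_between lt a a' x ->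
     forall A : {set C}, A \in P -> a \in A -> a' \in A -> x \in A)
  /\
  (forall f : forall C : finType, cost C,
     f = @cost_VD \/ f = @cost_MF \/ f = @cost_BC \/ f = @cost_MS ->
     exists (C : finType) (P : seq {set C}) (a a' : C) (lt : rel C)
            (x : C) (A : {set C}),
       [/\ is_profile P, clones P a a', in_rule (f C) P lt,
           strictly_between lt a a' x &
           [/\ A \in P, a \in A, a' \in A & x \notin A]]).
Proof.
split.
  move=> C P a a' _ cl lt rule x /orP[/andP[lax lxa'] | /andP[la'x lxa]] A AP aA a'A.
    exact: FT_clone_proximity cl rule lax lxa' AP aA.
  have cl' : clones P a' a by apply/allP => B /(allP cl); rewrite eq_sym.
  exact: FT_clone_proximity cl' rule la'x lxa AP a'A.
move=> f [|[|[|]]] ->.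
- exact: VD_clone_proximity_fails.
- exact: MF_clone_proximity_fails.
- exact: BC_clone_proximity_fails.
- exact: MS_clone_proximity_fails.
Qed.
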